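(* Let $m$ be a positive integer, let $\gamma=(f,g,h)\in C^m(\mathbb{R},\mathbb{R}^3)$ be a horizontal curve, and let $K\subseteq\mathbb{R}$ be compact. Then (1) the $m$th divided differences of $\gamma$ converge uniformly on $K$, and (2) $\gamma$ (restricted to $K$) satisfies the discrete $A/V$ condition on $K$.
   Context: A curve $\gamma=(f,g,h)$ with $f,g,h$ absolutely continuous is horizontal if $h'=2(f'g-fg')$ a.e. $C^m(\mathbb{R},\mathbb{R}^3)$: curves whose components are $m$-times continuously differentiable with bounded $m$th derivative. Divided differences: $\phi[x_0]=\phi(x_0)$, $\phi[x_0,\dots,x_k]=(\phi[x_1,\dots,x_k]-\phi[x_0,\dots,x_{k-1}])/(x_k-x_0)$ for distinct points. The $m$th divided differences of $\phi$ converge uniformly on $K$ if for every $\varepsilon>0$ there is $\delta>0$ with $|\phi[X]-\phi[Y]|<\varepsilon$ whenever $X,Y$ are sets of $m+1$ distinct points of $K$ with $\operatorname{diam}(X\cup Y)<\delta$; for $\gamma$ this is required of each component. For $X$ of $m+1$ distinct points, $P(X;\phi)$ is the unique polynomial of degree $\le m$ agreeing with $\phi$ on $X$ (Newton interpolation polynomial). For $\gamma=(f,g,h):E\to\mathbb{R}^3$, $X\subseteq E$, $\#X=m+1$, $P_f=P(X;f)$, $P_g=P(X;g)$, $a,b\in X$: $A[X,\gamma;a,b]=h(b)-h(a)-2\int_a^b(P_f'P_g-P_g'P_f)$, $V[X,\gamma;a,b]=\operatorname{diam}(X)^{2m}+\operatorname{diam}(X)^m\int_a^b(|P_f'|+|P_g'|)$.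 $\gamma$ satisfies the discrete $A/V$ condition on $E$ if for every $\varepsilon>0$ there is $\delta>0$ such that $|A[X,\gamma;a,b]/V[X,\gamma;a,b]|<\varepsilon$ for all $X\subseteq E$ with $\#X=m+1$, $\operatorname{diam}X<\delta$, and $a,b\in X$ with $a<b$. *)

From Stdlib Require Import Reals Lra.
From Coquelicot Require Import Coquelicot.
Open Scope R_scope.

Fixpoint sumR (F : nat -> R) (n : nat) : R :=
  match n with O => 0 | S k => sumR F k + F k end.
Fixpoint prodR (F : nat -> R) (n : nat) : R :=
  match n with O => 1 | S k => prodR F k * F k end.
(* max_{i<n} F i (for nonnegative F; 0 for n = 0) *)
Fixpoint maxR (F : nat -> R) (n : nat) : R :=
  match n with O => 0 | S k => Rmax (maxR F k) (F k) end.

Definition Cm (m : nat) (phi : R -> R) : Prop :=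
  (forall k x, (k < m)%nat -> ex_derive (Derive_n phi k) x) /\
  (forall x, continuous (Derive_n phi m) x) /\
  (exists B, forall x, Rabs (Derive_n phi m x) <= B).

Definition negligible (N : R -> Prop) : Prop :=
  forall eps, 0 < eps -> exists a b : nat -> R,
    (forall n, a n <= b n) /\
    (forall x, N x -> exists n, a n < x < b n) /\
    (forall n, sumR (fun k => b k - a k) n <= eps).

Definition abs_cont_on (u v : R) (phi : R -> R) : Prop :=
  forall eps, 0 < eps -> exists delta, 0 < delta /\
    forall (n : nat) (a b : nat -> R),
      (forall i, (i < n)%nat -> u <= a i <= b i /\ b i <= v) ->
      (forall i j, (i < n)%nat -> (j < n)%nat -> i <> j -> b i <= a j \/ b j <= a i) ->
      sumR (fun i => b i - a i) n < delta ->
      sumR (fun i => Rabs (phi (b i) - phi (a i))) n < eps.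

Definition loc_abs_cont (phi : R -> R) : Prop :=
  forall u v, u <= v -> abs_cont_on u v phi.

Definition horizontal (f g h : R -> R) : Prop :=
  loc_abs_cont f /\ loc_abs_cont g /\ loc_abs_cont h /\
  exists N, negligible N /\
    forall x, ~ N x ->
      ex_derive f x /\ ex_derive g x /\
      is_derive h x (2 * (Derive f x * g x - f x * Derive g x)).

Fixpoint divdiff (phi : R -> R) (k : nat) (x : nat -> R) : R :=
  match k with
  | O => phi (x O)
  | S k' => (divdiff phi k' (fun i => x (S i)) - divdiff phi k' x) / (x k - x O)
  end.

Definition points_in (m : nat) (E : R -> Prop) (x : nat -> R) : Prop :=
  (forall i, (i <= m)%nat -> E (x i)) /\
  (forall i j, (i <= m)%nat -> (j <= m)%nat -> i <> j -> x i <> x j).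

Definition diam (m : nat) (x : nat -> R) : R :=
  maxR (fun i => maxR (fun j => Rabs (x i - x j)) (S m)) (S m).

Definition diam_union_lt (m : nat) (x y : nat -> R) (delta : R) : Prop :=
  forall i j, (i <= m)%nat -> (j <= m)%nat ->
    Rabs (x i - x j) < delta /\ Rabs (y i - y j) < delta /\ Rabs (x i - y j) < delta.

Definition divdiff_unif_conv (m : nat) (phi : R -> R) (K : R -> Prop) : Prop :=
  forall eps, 0 < eps -> exists delta, 0 < delta /\
    forall x y, points_in m K x -> points_in m K y -> diam_union_lt m x y delta ->
      Rabs (divdiff phi m x - divdiff phi m y) < eps.

Definition newton (phi : R -> R) (m : nat) (x : nat -> R) (t : R) : R :=
  sumR (fun k => divdiff phi k x * prodR (fun j => t - x j) k) (S m).

Definition A_quant (m : nat) (f g h : R -> R) (x : nat -> R) (a b : R) : R :=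
  let Pf := newton f m x in let Pg := newton g m x in
  h b - h a - 2 * RInt (fun t => Derive Pf t * Pg t - Derive Pg t * Pf t) a b.

Definition V_quant (m : nat) (f g : R -> R) (x : nat -> R) (a b : R) : R :=
  let Pf := newton f m x in let Pg := newton g m x in
  diam m x ^ (2 * m) +
  diam m x ^ m * RInt (fun t => Rabs (Derive Pf t) + Rabs (Derive Pg t)) a b.

Definition discrete_AV (m : nat) (f g h : R -> R) (E : R -> Prop) : Prop :=
  forall eps, 0 < eps -> exists delta, 0 < delta /\
    forall x, points_in m E x -> diam m x < delta ->
      forall i j, (i <= m)%nat -> (j <= m)%nat -> x i < x j ->
        Rabs (A_quant m f g h x (x i) (x j) / V_quant m f g x (x i) (x j)) < eps.

(* Let P be the Newton interpolant of phi on the nodes X. Since phi - P vanishes at the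
   m + 1 nodes, Rolle's theorem applied along its derivatives gives, for every j <= m, a
   point of the hull of X where phi^(j) and P^(j) agree. For j = m this reads
   m! phi[X] = phi^(m)(xi), so (1) follows from the uniform continuity of phi^(m) on
   compact sets; integrating back from these zeros bounds |phi^(j) - P^(j)| near X by
   w (2 diam X)^(m-j), where w is the oscillation of phi^(m) there.
   For (2), horizontality holds everywhere, since both sides of h' = 2 (f' g - f g') are
   continuous and a null set has dense complement. With F = f - P_f, G = g - P_g and
   W = F P_g - P_f G - F G, which vanishes at the nodes, differentiating h - 2 W gives
   A = 4 int (P_f' G - F P_g' + F' G), and the error bounds make this at most
   4^(m+1) w V. *)

From Stdlib Require Import Reals.
From Coquelicot Require Import Coquelicot.
From Stdlib Require Import Lra Lia Factorial Classical List.
Open Scope R_scope.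

Lemma continuous_Rplus (f g : R -> R) x :
  continuous f x -> continuous g x -> continuous (fun t => f t + g t) x.
Proof. intros; now apply (continuous_plus f g). Qed.

Lemma continuous_Rminus (f g : R -> R) x :
  continuous f x -> continuous g x -> continuous (fun t => f t - g t) x.
Proof. intros; now apply (continuous_minus f g). Qed.

Lemma continuous_Rmult (f g : R -> R) x :
  continuous f x -> continuous g x -> continuous (fun t => f t * g t) x.
Proof. intros; now apply (continuous_mult f g). Qed.

Lemma is_derive_Rplus (f g : R -> R) x df dg :
  is_derive f x df -> is_derive g x dg -> is_derive (fun t => f t + g t) x (df + dg).
Proof. intros; now apply (is_derive_plus f g). Qed.

Lemma is_derive_Rminus (f g : R -> R) x df dg :
  is_derive f x df -> is_derive g x dg -> is_derive (fun t => f t - g t) x (df - dg).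
Proof. intros; now apply (is_derive_minus f g). Qed.

Lemma is_derive_eq (f : R -> R) (x l l' : R) : l = l' -> is_derive f x l -> is_derive f x l'.
Proof. now intros ->. Qed.

Lemma is_derive_continuous (f : R -> R) x l : is_derive f x l -> continuous f x.
Proof.
  intros H; apply (ex_derive_continuous (K := R_AbsRing) (V := R_NormedModule)).
  now exists l.
Qed.

Lemma prodR_shift F n : prodR F (S n) = F O * prodR (fun l => F (S l)) n.
Proof. induction n; simpl in *; [ring | rewrite IHn; ring]. Qed.

Lemma prodR_eq0 F n i : (i < n)%nat -> F i = 0 -> prodR F n = 0.
Proof.
  induction n; simpl; intros Hi Fi; [lia |].
  destruct (Nat.eq_dec i n) as [-> | ]; [rewrite Fi; ring |].
  rewrite IHn by (lia || auto); ring.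
Qed.

Lemma maxR_ge F n i : (i < n)%nat -> F i <= maxR F n.
Proof.
  induction n; simpl; intros Hi; [lia |].
  destruct (Nat.eq_dec i n) as [-> | ]; [apply Rmax_r |].
  eapply Rle_trans; [apply IHn; lia | apply Rmax_l].
Qed.

Lemma dist_le_diam m x i j :
  (i <= m)%nat -> (j <= m)%nat -> Rabs (x i - x j) <= diam m x.
Proof.
  intros; unfold diam.
  eapply Rle_trans; [| apply (maxR_ge _ _ i); lia].
  apply (maxR_ge (fun j => Rabs (x i - x j))); lia.
Qed.

Definition distinct (m : nat) (x : nat -> R) : Prop :=
  forall i j, (i <= m)%nat -> (j <= m)%nat -> i <> j -> x i <> x j.

Lemma diam_pos m x : (1 <= m)%nat -> distinct m x -> 0 < diam m x.
Proof.
  intros Hm Hx; assert (x O <> x 1%nat) by (apply Hx; lia).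
  generalize (dist_le_diam m x 0 1 ltac:(lia) Hm) (Rabs_pos_lt (x O - x 1%nat) ltac:(lra)); lra.
Qed.

Lemma nodes_near_first m x k : (k <= m)%nat -> x O - diam m x <= x k <= x O + diam m x.
Proof.
  intros Hk; generalize (dist_le_diam m x k 0 Hk ltac:(lia)).
  generalize (Rle_abs (x k - x O)) (Rabs_maj2 (x k - x O)); lra.
Qed.

(** * Newton interpolation and its derivatives *)

Lemma newton_S phi k x t : newton phi (S k) x t =
  newton phi k x t + divdiff phi (S k) x * prodR (fun l => t - x l) (S k).
Proof. reflexivity. Qed.

Lemma newton_S_shift phi k x t :
  (forall j, (1 <= j <= S k)%nat -> x j <> x O) ->
  newton phi (S k) x t = newton phi k (fun i => x (S i)) t +
    divdiff phi (S k) x * prodR (fun l => t - x (S l)) (S k).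
Proof.
  induction k; intros Hx.
  - assert (x 1%nat - x O <> 0) by (specialize (Hx 1%nat); intro; apply Hx; lia || lra).
    unfold newton; simpl; field; auto.
  - rewrite newton_S, IHk by (intros; apply Hx; lia).
    rewrite (newton_S phi k (fun i => x (S i))), (prodR_shift (fun l => t - x l) (S k)).
    assert (x (S (S k)) - x O <> 0)
      by (specialize (Hx (S (S k))); intro; apply Hx; lia || lra).
    change (divdiff phi (S (S k)) x) with
      ((divdiff phi (S k) (fun i => x (S i)) - divdiff phi (S k) x) / (x (S (S k)) - x O)).
    change (prodR (fun l => t - x (S l)) (S (S k))) with
      (prodR (fun l => t - x (S l)) (S k) * (t - x (S (S k)))).
    field; auto.
Qed.

Lemma newton_interp phi k x :
  distinct k x -> forall i, (i <= k)%nat -> newton phi k x (x i) = phi (x i).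
Proof.
  revert x; induction k; intros x Hx i Hi.
  - replace i with O by lia; unfold newton; simpl; ring.
  - destruct (Nat.eq_dec i (S k)) as [-> | Hik].
    + rewrite newton_S_shift by (intros j Hj; apply Hx; lia).
      rewrite (prodR_eq0 _ _ k), (IHk (fun i => x (S i)))
        by (ring || lia || (intros a b **; apply Hx; lia)).
      ring.
    + rewrite newton_S, (prodR_eq0 _ _ i), IHk
        by (ring || lia || (intros a b **; apply Hx; lia)).
      ring.
Qed.

Definition deriv_chain (n : nat) (u : nat -> R -> R) : Prop :=
  forall j t, (j < n)%nat -> is_derive (u j) t (u (S j) t).

Lemma deriv_chain_minus n u v :
  deriv_chain n u -> deriv_chain n v -> deriv_chain n (fun j t => u j t - v j t).
Proof. intros Hu Hv j t Hj; apply is_derive_Rminus; auto. Qed.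

Lemma deriv_chain_continuous n u :
  deriv_chain n u -> (forall t, continuous (u n) t) ->
  forall j t, (j <= n)%nat -> continuous (u j) t.
Proof.
  intros Hu Hn j t Hj; destruct (Nat.eq_dec j n) as [-> | ]; auto.
  apply (is_derive_continuous _ _ _ (Hu j t ltac:(lia))).
Qed.

Lemma Cm_deriv_chain m phi : Cm m phi -> deriv_chain m (Derive_n phi).
Proof. intros [Hd _] j t Hj; apply Derive_correct, Hd, Hj. Qed.

Lemma Cm_continuous m phi :
  Cm m phi -> forall j t, (j <= m)%nat -> continuous (Derive_n phi j) t.
Proof.
  intros Hphi; apply deriv_chain_continuous; [apply Cm_deriv_chain | apply Hphi]; auto.
Qed.

Fixpoint nth_deriv_const (n : nat) (c : R) (p : R -> R) : Prop :=
  match n with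
  | O => forall t, p t = c
  | S n => exists q, nth_deriv_const n c q /\ forall t, is_derive p t (q t)
  end.

Lemma nth_deriv_const_ext n c c' p p' :
  c = c' -> (forall t, p t = p' t) -> nth_deriv_const n c p -> nth_deriv_const n c' p'.
Proof.
  intros <- E; destruct n as [| n]; simpl.
  - intros Hp t; rewrite <- E; auto.
  - intros [q [Hq Dp]]; exists q; split; auto.
    intros t; apply (is_derive_ext p); auto.
Qed.

Lemma nth_deriv_const_plus n c1 c2 p q :
  nth_deriv_const n c1 p -> nth_deriv_const n c2 q ->
  nth_deriv_const n (c1 + c2) (fun t => p t + q t).
Proof.
  revert p q; induction n; simpl; intros p q Hp Hq.
  - intros t; rewrite Hp, Hq; auto.
  - destruct Hp as [p' [Hp' Dp]], Hq as [q' [Hq' Dq]].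
    exists (fun t => p' t + q' t); split; auto.
    intros; apply is_derive_Rplus; auto.
Qed.

Lemma nth_deriv_const_scal n c k p :
  nth_deriv_const n c p -> nth_deriv_const n (k * c) (fun t => k * p t).
Proof.
  revert p; induction n; simpl; intros p Hp.
  - intros t; rewrite Hp; auto.
  - destruct Hp as [p' [Hp' Dp]]; exists (fun t => k * p' t); split; auto.
    intros; apply is_derive_scal; auto.
Qed.

Lemma nth_deriv_const_S n c p : nth_deriv_const n c p -> nth_deriv_const (S n) 0 p.
Proof.
  revert p; induction n; simpl; intros p Hp.
  - exists (fun _ => 0); split; auto.
    intros t; apply (is_derive_ext (fun _ => c)); [auto | apply (is_derive_const c)].
  - destruct Hp as [p' [Hp' Dp]]; exists p'; split; auto.
    eapply IHn; eauto.
Qed.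

Lemma nth_deriv_const_mul_linear n c p a :
  nth_deriv_const n c p ->
  nth_deriv_const (S n) (INR (S n) * c) (fun t => p t * (t - a)).
Proof.
  assert (Dl : forall t, is_derive (fun t => t - a) t 1).
  { intros t; auto_derive; auto; ring. }
  revert c p; induction n; intros c p Hp.
  - exists (fun _ => c); split; [simpl; intros; ring |].
    intros t; apply (is_derive_ext (fun t => c * (t - a)));
      [intros s; simpl in Hp; now rewrite Hp |].
    apply (is_derive_eq _ _ (c * 1)); [ring | apply is_derive_scal, Dl].
  - destruct Hp as [p' [Hp' Dp]].
    exists (fun t => p' t * (t - a) + p t); split.
    + apply (nth_deriv_const_ext _ (INR (S n) * c + c) _ (fun t => p' t * (t - a) + p t));
        [rewrite (S_INR (S n)); ring | auto |].
      apply nth_deriv_const_plus; [apply IHn | exists p']; auto.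
    + intros t; apply (is_derive_eq _ _ (p' t * (t - a) + p t * 1)); [ring |].
      apply (Derive.is_derive_mult p (fun t => t - a)); auto.
Qed.

Lemma nth_deriv_const_prod x k :
  nth_deriv_const k (INR (fact k)) (fun t => prodR (fun l => t - x l) k).
Proof.
  induction k; [simpl; auto |].
  apply (nth_deriv_const_ext _ (INR (S k) * INR (fact k)) _
    (fun t => prodR (fun l => t - x l) k * (t - x k))); auto.
  - rewrite <- mult_INR; reflexivity.
  - apply nth_deriv_const_mul_linear, IHk.
Qed.

Lemma nth_deriv_const_newton phi m x :
  nth_deriv_const m (INR (fact m) * divdiff phi m x) (newton phi m x).
Proof.
  induction m; [unfold newton; simpl; intros; ring |].
  apply (nth_deriv_const_ext _ (0 + divdiff phi (S m) x * INR (fact (S m))) _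
    (fun t => newton phi m x t + divdiff phi (S m) x * prodR (fun l => t - x l) (S m)));
    [ring | auto |].
  apply nth_deriv_const_plus.
  - eapply nth_deriv_const_S; eauto.
  - apply nth_deriv_const_scal, nth_deriv_const_prod.
Qed.

Lemma nth_deriv_const_Derive_n n c p :
  nth_deriv_const n c p -> deriv_chain n (Derive_n p) /\ forall t, Derive_n p n t = c.
Proof.
  revert p; induction n; simpl; intros p Hp.
  - split; [intros j t Hj; lia | apply Hp].
  - destruct Hp as [q [Hq Dp]]; destruct (IHn q Hq) as [Cq Tq].
    assert (Eq : forall j t, Derive_n p (S j) t = Derive_n q j t).
    { intros j t; rewrite <- Nat.add_1_r, <- Derive_n_comp.
      apply Derive_n_ext; intros s; apply is_derive_unique, Dp. }
    split.
    + intros [| j] t Hj.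
      * apply (is_derive_eq _ _ (q t)); [symmetry; apply (Eq O) | apply Dp].
      * rewrite Eq; apply (is_derive_ext (Derive_n q j)); [intros; symmetry; apply Eq |].
        apply Cq; lia.
    + intros t; rewrite <- Tq with t; apply Eq.
Qed.

Lemma newton_deriv_chain phi m x :
  deriv_chain m (Derive_n (newton phi m x)) /\
  forall t, Derive_n (newton phi m x) m t = INR (fact m) * divdiff phi m x.
Proof. apply nth_deriv_const_Derive_n, nth_deriv_const_newton. Qed.

Lemma newton_continuous phi m x :
  forall j t, (j <= m)%nat -> continuous (Derive_n (newton phi m x) j) t.
Proof.
  destruct (newton_deriv_chain phi m x) as [Cn Tn].
  apply deriv_chain_continuous; auto.
  intros t; apply (continuous_ext (fun _ => INR (fact m) * divdiff phi m x));
    [intros; symmetry; apply Tn | apply continuous_const].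
Qed.

(** * Rolle's theorem along a derivative chain *)

Definition increasing_nodes (k : nat) (z : nat -> R) : Prop :=
  forall j, (j < k)%nat -> z j < z (S j).

Lemma increasing_nodes_lt k z :
  increasing_nodes k z -> forall i j, (i < j)%nat -> (j <= k)%nat -> z i < z j.
Proof.
  intros Hz i j Hij; induction Hij; intros Hk; [apply Hz; lia |].
  eapply Rlt_trans; [apply IHHij; lia | apply Hz; lia].
Qed.

Lemma increasing_nodes_le k z :
  increasing_nodes k z -> forall i j, (i <= j)%nat -> (j <= k)%nat -> z i <= z j.
Proof.
  intros Hz i j Hij Hk; destruct (Nat.eq_dec i j) as [-> | ]; [lra |].
  left; apply (increasing_nodes_lt k); auto; lia.
Qed.

Definition cons_node (y : R) (z : nat -> R) : nat -> R :=
  fun i => match i with O => y | S i => z i end.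

Lemma increasing_nodes_insert k z y :
  increasing_nodes k z -> (forall j, (j <= k)%nat -> y <> z j) ->
  exists z', increasing_nodes (S k) z' /\
    forall j, (j <= S k)%nat -> z' j = y \/ exists i, (i <= k)%nat /\ z' j = z i.
Proof.
  revert z; induction k; intros z Hz Hy.
  - destruct (Rlt_or_le y (z O)) as [Hlt | Hle].
    + exists (cons_node y z); split; [intros j Hj; replace j with O by lia; auto |].
      intros [| j] Hj; [now left | right; exists O; split; [lia | simpl; f_equal; lia]].
    + assert (z O < y) by (destruct Hle; auto; exfalso; apply (Hy O); auto).
      exists (cons_node (z O) (fun _ => y)).
      split; [intros j Hj; replace j with O by lia; auto |].
      intros [| j] Hj; [right; exists O; auto | now left].
  - destruct (Rlt_or_le y (z O)) as [Hlt | Hle].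
    + exists (cons_node y z); split.
      * intros [| j] Hj; simpl; auto; apply Hz; lia.
      * intros [| j] Hj; [now left | right; exists j; split; auto; lia].
    + assert (z O < y) by (destruct Hle; auto; exfalso; apply (Hy O); auto; lia).
      destruct (IHk (fun i => z (S i))) as [w [Hw Ew]];
        [intros j Hj; apply Hz; lia | intros j Hj; apply Hy; lia |].
      exists (cons_node (z O) w); split.
      * intros [| j] Hj; simpl; [| apply Hw; lia].
        destruct (Ew O ltac:(lia)) as [-> | [i [Hi ->]]]; auto.
        apply (increasing_nodes_lt (S k) z); auto; lia.
      * intros [| j] Hj; [right; exists O; split; auto; lia |].
        simpl; destruct (Ew j ltac:(lia)) as [E | [i [Hi E]]]; [now left |].
        right; exists (S i); split; auto; lia.
Qed.

Lemma sort_nodes k x : distinct k x ->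
  exists z, increasing_nodes k z /\ forall j, (j <= k)%nat -> exists i, (i <= k)%nat /\ z j = x i.
Proof.
  induction k; intros Hx.
  - exists x; split; [intros j Hj; lia | intros j Hj; exists j; auto].
  - destruct IHk as [z [Hz Ez]]; [intros i j Hi Hj; apply Hx; lia |].
    destruct (increasing_nodes_insert k z (x (S k)) Hz) as [z' [Hz' Ez']].
    { intros j Hj E; destruct (Ez j Hj) as [i [Hi E']]; rewrite E' in E.
      apply (Hx (S k) i); auto; lia. }
    exists z'; split; auto; intros j Hj.
    destruct (Ez' j Hj) as [E | [i [Hi E]]]; [exists (S k); auto |].
    destruct (Ez i Hi) as [i' [Hi' E']]; exists i'; split; [lia | congruence].
Qed.

Lemma finite_choice (k : nat) (P : nat -> R -> Prop) :
  (forall j, (j <= k)%nat -> exists y, P j y) ->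
  exists w : nat -> R, forall j, (j <= k)%nat -> P j (w j).
Proof.
  induction k; intros H.
  - destruct (H O ltac:(lia)) as [y Hy]; exists (fun _ => y).
    intros j Hj; replace j with O by lia; auto.
  - destruct IHk as [w Hw]; [intros; apply H; lia |].
    destruct (H (S k) ltac:(lia)) as [y Hy].
    exists (fun j => if Nat.eq_dec j (S k) then y else w j); intros j Hj.
    destruct (Nat.eq_dec j (S k)) as [-> | ]; auto; apply Hw; lia.
Qed.

Lemma Rolle_is_derive (f df : R -> R) a b :
  (forall t, is_derive f t (df t)) -> a < b -> f a = f b -> exists c, a < c < b /\ df c = 0.
Proof.
  intros Hf Hab Eab.
  assert (Hd : forall t, derivable_pt_lim f t (df t)) by (intros; apply is_derive_Reals, Hf).
  destruct (Rolle f a b (fun t _ => exist _ (df t) (Hd t))) as [c [Hc Ec]]; auto.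
  - intros t _; apply derivable_continuous_pt; exists (df t); apply Hd.
  - exists c; split; auto; rewrite <- Ec; simpl; reflexivity.
Qed.

Lemma deriv_chain_Rolle k u z :
  deriv_chain k u -> increasing_nodes k z -> (forall j, (j <= k)%nat -> u O (z j) = 0) ->
  forall j, (j <= k)%nat -> exists xi, z O <= xi <= z k /\ u j xi = 0.
Proof.
  revert u z; induction k; intros u z Hu Hz H0 [| j] Hj; try lia.
  1-2: exists (z O); split; [split; [lra | eapply increasing_nodes_le; eauto; lia] |
    apply H0; lia].
  - destruct (finite_choice k (fun i c => z i < c < z (S i) /\ u 1%nat c = 0)) as [w Hw].
    { intros i Hi; apply (Rolle_is_derive (u O) (u 1%nat));
        [intros; apply Hu; lia | apply Hz; lia |].
      rewrite !H0 by lia; auto. }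
    destruct (IHk (fun i => u (S i)) w) with (j := j) as [xi [Hxi Exi]].
    + intros i t Hi; apply Hu; lia.
    + intros i Hi; destruct (Hw i ltac:(lia)), (Hw (S i) ltac:(lia)); lra.
    + intros i Hi; apply Hw; auto.
    + lia.
    + exists xi; split; auto.
      destruct (Hw O ltac:(lia)), (Hw k ltac:(lia)); lra.
Qed.

Definition between_nodes (m : nat) (x : nat -> R) (xi : R) : Prop :=
  exists a b, (a <= m)%nat /\ (b <= m)%nat /\ x a <= xi <= x b.

Lemma newton_Derive_n_agree phi m x : Cm m phi -> distinct m x ->
  forall j, (j <= m)%nat -> exists xi, between_nodes m x xi /\
    Derive_n phi j xi = Derive_n (newton phi m x) j xi.
Proof.
  intros Hphi Hx j Hj.
  destruct (sort_nodes m x Hx) as [z [Hz Ez]].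
  destruct (deriv_chain_Rolle m (fun j t => Derive_n phi j t - Derive_n (newton phi m x) j t) z)
    with (j := j) as [xi [Hxi E]]; auto.
  - apply deriv_chain_minus; [apply Cm_deriv_chain, Hphi | apply newton_deriv_chain].
  - intros i Hi; destruct (Ez i Hi) as [i' [Hi' ->]]; simpl.
    rewrite newton_interp; auto; ring.
  - exists xi; split; [| lra].
    destruct (Ez O ltac:(lia)) as [a [Ha Ea]], (Ez m ltac:(lia)) as [b [Hb Eb]].
    exists a, b; rewrite <- Ea, <- Eb; auto.
Qed.

Lemma divdiff_mean_value phi m x : Cm m phi -> distinct m x ->
  exists xi, between_nodes m x xi /\ INR (fact m) * divdiff phi m x = Derive_n phi m xi.
Proof.
  intros Hphi Hx; destruct (newton_Derive_n_agree phi m x Hphi Hx m) as [xi [Hxi E]]; auto.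
  exists xi; split; auto; rewrite E; symmetry; apply newton_deriv_chain.
Qed.

Lemma mvt_zero_bound (psi dpsi : R -> R) lo hi B xi t :
  (forall s, is_derive psi s (dpsi s)) -> (forall s, lo <= s <= hi -> Rabs (dpsi s) <= B) ->
  lo <= xi <= hi -> psi xi = 0 -> lo <= t <= hi -> Rabs (psi t) <= B * (hi - lo).
Proof.
  intros Hd HB Hxi E Ht.
  destruct (MVT_gen psi xi t dpsi) as [c [Hc Ec]].
  - intros; apply Hd.
  - intros; apply derivable_continuous_pt; exists (dpsi x); apply is_derive_Reals, Hd.
  - assert (Hc' : lo <= c <= hi) by (revert Hc; unfold Rmin, Rmax; destruct Rle_dec; lra).
    replace (psi t) with (dpsi c * (t - xi)) by lra.
    rewrite Rabs_mult; apply Rmult_le_compat; auto using Rabs_pos.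
    apply Rabs_le; lra.
Qed.

Lemma deriv_chain_zeros_bound m u lo hi om :
  deriv_chain m u -> (forall j, (j <= m)%nat -> exists xi, lo <= xi <= hi /\ u j xi = 0) ->
  (forall t, lo <= t <= hi -> Rabs (u m t) <= om) ->
  forall j t, (j <= m)%nat -> lo <= t <= hi -> Rabs (u j t) <= om * (hi - lo) ^ (m - j).
Proof.
  intros Hu Hz Hm.
  assert (H : forall i t, (i <= m)%nat -> lo <= t <= hi ->
    Rabs (u (m - i)%nat t) <= om * (hi - lo) ^ i).
  { induction i; intros t Hi Ht.
    - rewrite Nat.sub_0_r, Rmult_1_r; auto.
    - destruct (Hz (m - S i)%nat ltac:(lia)) as [xi [Hxi E]].
      rewrite <- tech_pow_Rmult, (Rmult_comm (hi - lo)), <- Rmult_assoc.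
      apply (mvt_zero_bound _ (u (m - i)%nat) lo hi _ xi); auto.
      + intros s; replace (m - i)%nat with (S (m - S i)) by lia; apply Hu; lia.
      + intros; apply IHi; auto; lia. }
  intros j t Hj Ht; replace j with (m - (m - j))%nat at 1 by lia; apply H; auto; lia.
Qed.

Lemma newton_error_bound phi m x lo hi om : Cm m phi -> distinct m x ->
  (forall i, (i <= m)%nat -> lo <= x i <= hi) ->
  (forall s t, lo <= s <= hi -> lo <= t <= hi ->
     Rabs (Derive_n phi m s - Derive_n phi m t) <= om) ->
  forall j t, (j <= m)%nat -> lo <= t <= hi ->
    Rabs (Derive_n phi j t - Derive_n (newton phi m x) j t) <= om * (hi - lo) ^ (m - j).
Proof.
  intros Hphi Hx Hnodes Hom.
  assert (Hhull : forall xi, between_nodes m x xi -> lo <= xi <= hi).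
  { intros xi [a [b [Ha [Hb Hab]]]]; generalize (Hnodes a Ha) (Hnodes b Hb); lra. }
  apply deriv_chain_zeros_bound.
  - apply deriv_chain_minus; [apply Cm_deriv_chain, Hphi | apply newton_deriv_chain].
  - intros j Hj; destruct (newton_Derive_n_agree phi m x Hphi Hx j Hj) as [xi [Hxi E]].
    exists xi; split; auto; lra.
  - intros t Ht; destruct (divdiff_mean_value phi m x Hphi Hx) as [xi [Hxi E]].
    rewrite (proj2 (newton_deriv_chain phi m x) t), E; auto.
Qed.

(** * Null sets and horizontality *)

Lemma sumR_le F G n : (forall i, (i < n)%nat -> F i <= G i) -> sumR F n <= sumR G n.
Proof.
  induction n; simpl; intros H; [lra |].
  apply Rplus_le_compat; [apply IHn; intros i Hi |]; apply H; lia.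
Qed.

Lemma sumR_nonneg F n : (forall i, (i < n)%nat -> 0 <= F i) -> 0 <= sumR F n.
Proof.
  induction n; simpl; intros H; [lra |].
  apply Rplus_le_le_0_compat; [apply IHn; intros i Hi |]; apply H; lia.
Qed.

Lemma sumR_plus F G n : sumR (fun i => F i + G i) n = sumR F n + sumR G n.
Proof. induction n; simpl; [ring | rewrite IHn; ring]. Qed.

Definition overlap (a b c e : R) : R := Rmax 0 (Rmin b e - Rmax a c).

Ltac unfold_minmax := unfold overlap, Rmax, Rmin in *; repeat destruct Rle_dec.

Lemma overlap_nonneg a b c e : 0 <= overlap a b c e.
Proof. apply Rmax_l. Qed.

Lemma overlap_le a b c e : a <= b -> overlap a b c e <= b - a.
Proof. intros; unfold_minmax; lra. Qed.

Lemma overlap_split a b c e p q : p <= q -> p <= e -> c <= q ->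
  overlap a b c p + overlap a b q e <= overlap a b c e.
Proof. intros; unfold_minmax; lra. Qed.

Lemma length_le_cover_length N : forall (a b : nat -> R) c e,
  (forall x, c <= x <= e -> exists n, (n < N)%nat /\ a n < x < b n) ->
  e - c <= sumR (fun n => overlap (a n) (b n) c e) N.
Proof.
  induction N; intros a b c e Hcov; simpl.
  - destruct (Rle_lt_dec c e); [destruct (Hcov c) as [n [Hn _]]; lra || lia | lra].
  - set (ovl := fun c e => sumR (fun n => overlap (a n) (b n) c e) N).
    assert (Hrest : forall c' e', c <= c' -> e' <= e ->
      (forall x, c' <= x <= e' -> ~ a N < x < b N) -> e' - c' <= ovl c' e').
    { intros c' e' Hc He Hout; apply IHN; intros x Hx.
      destruct (Hcov x ltac:(lra)) as [n [Hn Hab]]; exists n; split; auto.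
      destruct (Nat.eq_dec n N) as [-> | ]; [exfalso; apply (Hout x); auto | lia]. }
    destruct (Rlt_or_le (a N) (b N)) as [HN | HN].
    (* The first N intervals cover what ]a N, b N[ leaves of [c, e]: [c, p] and [q, e]. *)
    + set (p := Rmin e (a N)); set (q := Rmax c (b N)).
      assert (H1 : p - c <= ovl c p) by (apply Hrest; unfold p; unfold_minmax; intros; lra).
      assert (H2 : e - q <= ovl q e) by (apply Hrest; unfold q; unfold_minmax; intros; lra).
      assert (H3 : ovl c p + ovl q e <= ovl c e).
      { unfold ovl; rewrite <- sumR_plus; apply sumR_le.
        intros; apply overlap_split; unfold p, q; unfold_minmax; lra. }
      assert (0 <= ovl c p /\ 0 <= ovl q e) as [];
        [split; apply sumR_nonneg; intros; apply overlap_nonneg |].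
      fold (ovl c e); clearbody ovl; subst p q; unfold_minmax; lra.
    + assert (H := Hrest c e ltac:(lra) ltac:(lra) ltac:(intros; lra)).
      generalize (overlap_nonneg (a N) (b N) c e); fold (ovl c e); lra.
Qed.

Lemma nat_list_bound (l : list R) :
  exists N, forall n, In (INR n) l -> (n < N)%nat.
Proof.
  induction l as [| y l [N HN]]; [exists O; intros n [] |].
  destruct (classic (exists n, y = INR n)) as [[n0 ->] | Hy].
  - exists (Nat.max N (S n0)); intros n [E | H].
    + apply INR_eq in E; lia.
    + specialize (HN n H); lia.
  - exists N; intros n [E | H]; [exfalso; apply Hy; eauto | auto].
Qed.

(* Stdlib's open covers are indexed by reals: ]a n, b n[ gets the index INR n. *)
Lemma finite_subcover (a b : nat -> R) c e :
  (forall x, c <= x <= e -> exists n, a n < x < b n) ->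
  exists N, forall x, c <= x <= e -> exists n, (n < N)%nat /\ a n < x < b n.
Proof.
  intros Hcov.
  set (fam := mkfamily (fun y => exists n : nat, y = INR n)
    (fun y x => exists n, y = INR n /\ a n < x < b n)
    ltac:(intros y [x [n [E _]]]; eauto)).
  destruct (compact_P3 c e fam) as [D [Dcov [l Hl]]].
  - split.
    + intros x Hx; destruct (Hcov x Hx) as [n Hn]; exists (INR n); simpl; eauto.
    + intros y x [n [E Hx]].
      assert (Hr : 0 < Rmin (x - a n) (b n - x)) by (apply Rmin_pos; lra).
      exists (mkposreal _ Hr); intros z Hz; exists n; split; auto.
      unfold disc in Hz; simpl in Hz; apply Rabs_def2 in Hz; revert Hz; unfold_minmax; lra.
  - destruct (nat_list_bound l) as [N HN]; exists N; intros x Hx.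
    destruct (Dcov x Hx) as [y [[n [-> Hab]] Dy]].
    exists n; split; auto; apply HN, Hl; split; simpl; eauto.
Qed.

Lemma negligible_dense N : negligible N ->
  forall t eta, 0 < eta -> exists s, ~ N s /\ Rabs (s - t) < eta.
Proof.
  intros HN t eta He; apply NNPP; intros Hno.
  destruct (HN (eta / 4)) as [a [b [Hab [Hcov Hsum]]]]; [lra |].
  destruct (finite_subcover a b (t - eta / 2) (t + eta / 2)) as [M HM].
  { intros x Hx; apply Hcov, NNPP; intros Hx'; apply Hno; exists x; split; auto.
    apply Rabs_def1; lra. }
  generalize (length_le_cover_length M a b _ _ HM) (Hsum M).
  assert (sumR (fun n => overlap (a n) (b n) (t - eta / 2) (t + eta / 2)) M <=
          sumR (fun k => b k - a k) M) by (apply sumR_le; intros; apply overlap_le, Hab).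
  lra.
Qed.

Lemma continuous_zero_off_negligible N (u : R -> R) : negligible N ->
  (forall t, continuous u t) -> (forall t, ~ N t -> u t = 0) -> forall t, u t = 0.
Proof.
  intros HN Hu H0 t; apply NNPP; intros Ht.
  assert (Hpos : 0 < Rabs (u t) / 2) by (apply Rabs_pos_lt in Ht; lra).
  destruct (proj2 (continuity_pt_filterlim u t) (Hu t) _ Hpos) as [del [Hdel Hnear]].
  destruct (negligible_dense N HN t del Hdel) as [s [Hs Hst]].
  destruct (Req_dec s t) as [-> | Hne]; [now apply Ht, H0 |].
  specialize (Hnear s (conj (conj I (not_eq_sym Hne)) Hst)); simpl in Hnear.
  unfold R_dist in Hnear; rewrite H0, Rminus_0_l, Rabs_Ropp in Hnear by auto; lra.
Qed.

Definition is_C1 (u : R -> R) : Prop :=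
  forall t, is_derive u t (Derive u t) /\ continuous (Derive u) t.

Lemma is_C1_continuous u t : is_C1 u -> continuous u t.
Proof. intros Hu; apply (is_derive_continuous _ _ _ (proj1 (Hu t))). Qed.

Lemma Cm_is_C1 m phi : (1 <= m)%nat -> Cm m phi -> is_C1 phi.
Proof.
  intros Hm Hphi t; split.
  - apply (Cm_deriv_chain m phi Hphi O); lia.
  - apply (Cm_continuous m phi Hphi 1); lia.
Qed.

Lemma newton_is_C1 phi m x : (1 <= m)%nat -> is_C1 (newton phi m x).
Proof.
  intros Hm t; split.
  - apply (proj1 (newton_deriv_chain phi m x) O); lia.
  - apply (newton_continuous phi m x 1); lia.
Qed.

Lemma horizontal_C1_everywhere f g h : is_C1 f -> is_C1 g -> is_C1 h -> horizontal f g h ->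
  forall t, Derive h t = 2 * (Derive f t * g t - f t * Derive g t).
Proof.
  intros Hf Hg Hh [_ [_ [_ [N [HN Hae]]]]] t.
  enough (E : Derive h t - 2 * (Derive f t * g t - f t * Derive g t) = 0) by lra.
  revert t; apply (continuous_zero_off_negligible N); auto.
  - intros t; apply continuous_Rminus; [apply Hh |].
    apply (continuous_Rmult (fun _ => 2)); [apply continuous_const |].
    apply continuous_Rminus; apply continuous_Rmult;
      auto using is_C1_continuous; [apply Hf | apply Hg].
  - intros t Ht; destruct (Hae t Ht) as [_ [_ Dh]].
    rewrite (is_derive_unique h t _ Dh); ring.
Qed.

(** * The A/V estimate *)

Lemma ex_RInt_continuous_R (u : R -> R) a b : (forall t, continuous u t) -> ex_RInt u a b.
Proof. intros Hu; apply (ex_RInt_continuous (V := R_CompleteNormedModule)); auto. Qed.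

Lemma RInt_lin_comb (u v : R -> R) a b k l : ex_RInt u a b -> ex_RInt v a b ->
  RInt (fun t => k * u t + l * v t) a b = k * RInt u a b + l * RInt v a b.
Proof.
  intros Hu Hv; apply is_RInt_unique.
  exact (is_RInt_plus _ _ a b _ _ (is_RInt_scal u a b k _ (RInt_correct u a b Hu))
    (is_RInt_scal v a b l _ (RInt_correct v a b Hv))).
Qed.

Lemma RInt_affine (u : R -> R) a b k c : ex_RInt u a b ->
  RInt (fun t => k * u t + c) a b = k * RInt u a b + c * (b - a).
Proof.
  intros Hu; rewrite (RInt_ext _ (fun t => k * u t + c * 1)) by (intros; now rewrite Rmult_1_r).
  rewrite RInt_lin_comb, RInt_const by (auto; apply ex_RInt_const).
  unfold scal; simpl; unfold mult; simpl; ring.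
Qed.

Lemma horizontal_lift_defect f g h p q a b :
  is_C1 f -> is_C1 g -> is_C1 h -> is_C1 p -> is_C1 q ->
  (forall t, Derive h t = 2 * (Derive f t * g t - f t * Derive g t)) ->
  p a = f a -> q a = g a -> p b = f b -> q b = g b ->
  h b - h a - 2 * RInt (fun t => Derive p t * q t - Derive q t * p t) a b =
  4 * RInt (fun t => Derive p t * (g t - q t) - (f t - p t) * Derive q t
                     + (Derive f t - Derive p t) * (g t - q t)) a b.
Proof.
  intros Hf Hg Hh Hp Hq Hhor Ea Fa Eb Fb.
  set (F := fun t => f t - p t); set (G := fun t => g t - q t).
  set (Q := fun t => Derive p t * q t - Derive q t * p t).
  set (Rem := fun t => Derive p t * G t - F t * Derive q t + (Derive f t - Derive p t) * G t).
  set (W := fun t => F t * q t - p t * G t - F t * G t).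
  assert (Hcont : forall u, is_C1 u -> forall t, continuous u t /\ continuous (Derive u) t)
    by (intros u Hu t; split; [apply is_C1_continuous | apply Hu]; auto).
  assert (cQ : forall t, continuous Q t).
  { intros t; destruct (Hcont p Hp t), (Hcont q Hq t).
    apply continuous_Rminus; apply continuous_Rmult; auto. }
  assert (cRem : forall t, continuous Rem t).
  { intros t; destruct (Hcont f Hf t), (Hcont g Hg t), (Hcont p Hp t), (Hcont q Hq t).
    unfold Rem, F, G.
    apply continuous_Rplus; [apply continuous_Rminus |]; apply continuous_Rmult;
      auto using continuous_Rminus. }
  assert (dPsi : forall t, is_derive (fun t => h t - 2 * W t) t (2 * Q t + 4 * Rem t)).
  { intros t.
    destruct (Hf t) as [df _], (Hg t) as [dg _], (Hp t) as [dp _], (Hq t) as [dq _].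
    assert (dF := is_derive_Rminus _ _ _ _ _ df dp).
    assert (dG := is_derive_Rminus _ _ _ _ _ dg dq).
    assert (dW := is_derive_Rminus _ _ _ _ _ (is_derive_Rminus _ _ _ _ _
      (Derive.is_derive_mult F q _ _ _ dF dq) (Derive.is_derive_mult p G _ _ _ dp dG))
      (Derive.is_derive_mult F G _ _ _ dF dG)).
    refine (is_derive_eq _ _ _ _ _
      (is_derive_Rminus _ _ _ _ _ (proj1 (Hh t)) (is_derive_scal W t 2 _ dW))).
    rewrite Hhor; unfold Q, Rem, F, G; ring. }
  assert (IPsi := is_RInt_derive (V := R_CompleteNormedModule) _ _ a b
    (fun t _ => dPsi t) (fun t _ => continuous_Rplus _ _ t
      (continuous_Rmult (fun _ => 2) Q t (continuous_const 2 t) (cQ t))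
      (continuous_Rmult (fun _ => 4) Rem t (continuous_const 4 t) (cRem t)))).
  apply is_RInt_unique in IPsi.
  rewrite RInt_lin_comb in IPsi by (apply ex_RInt_continuous_R; auto).
  assert (W a = 0 /\ W b = 0) as [Wa Wb]
    by (unfold W, F, G; rewrite Ea, Fa, Eb, Fb; split; ring).
  unfold minus, plus, opp, Rem, F, G in IPsi; simpl in IPsi.
  rewrite Wa, Wb in IPsi; lra.
Qed.

Lemma RInt_lift_remainder_bound (dp dq F G dF : R -> R) a b E E1 : a <= b ->
  (forall t, continuous dp t) -> (forall t, continuous dq t) ->
  (forall t, continuous F t) -> (forall t, continuous G t) -> (forall t, continuous dF t) ->
  (forall t, a < t < b -> Rabs (F t) <= E /\ Rabs (G t) <= E /\ Rabs (dF t) <= E1) ->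
  Rabs (RInt (fun t => dp t * G t - F t * dq t + dF t * G t) a b) <=
    E * RInt (fun t => Rabs (dp t) + Rabs (dq t)) a b + E1 * E * (b - a).
Proof.
  intros Hab cdp cdq cF cG cdF Hb.
  assert (cAbs : forall t, continuous (fun t => Rabs (dp t) + Rabs (dq t)) t)
    by (intros t; apply continuous_Rplus; apply continuous_Rabs_comp; auto).
  assert (cRem : forall t, continuous (fun t => dp t * G t - F t * dq t + dF t * G t) t)
    by (intros t; apply continuous_Rplus; [apply continuous_Rminus |];
        apply continuous_Rmult; auto).
  rewrite <- RInt_affine by (apply ex_RInt_continuous_R; auto).
  eapply Rle_trans; [apply abs_RInt_le; auto; apply ex_RInt_continuous_R; auto |].
  apply RInt_le; auto; try apply ex_RInt_continuous_R.
  - intros t; apply continuous_Rabs_comp, cRem.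
  - intros t; apply continuous_Rplus; [apply (continuous_Rmult (fun _ => E)) |];
      auto using continuous_const.
  - intros t Ht; destruct (Hb t Ht) as [BF [BG BdF]].
    eapply Rle_trans; [apply Rabs_triang |].
    eapply Rle_trans; [apply Rplus_le_compat_r, Rabs_triang |].
    rewrite Rabs_Ropp, !Rabs_mult.
    assert (Rabs (dp t) * Rabs (G t) <= Rabs (dp t) * E)
      by (apply Rmult_le_compat_l; auto using Rabs_pos).
    assert (Rabs (F t) * Rabs (dq t) <= E * Rabs (dq t))
      by (apply Rmult_le_compat_r; auto using Rabs_pos).
    assert (Rabs (dF t) * Rabs (G t) <= E1 * E)
      by (apply Rmult_le_compat; auto using Rabs_pos).
    lra.
Qed.

Lemma A_quant_bound m f g h x lo hi om i j : (1 <= m)%nat ->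
  Cm m f -> Cm m g -> Cm m h -> horizontal f g h -> distinct m x ->
  (forall k, (k <= m)%nat -> lo <= x k <= hi) ->
  (forall s t, lo <= s <= hi -> lo <= t <= hi -> Rabs (Derive_n f m s - Derive_n f m t) <= om) ->
  (forall s t, lo <= s <= hi -> lo <= t <= hi -> Rabs (Derive_n g m s - Derive_n g m t) <= om) ->
  (i <= m)%nat -> (j <= m)%nat -> x i <= x j ->
  Rabs (A_quant m f g h x (x i) (x j)) <=
    4 * (om * (hi - lo) ^ m *
         RInt (fun t => Rabs (Derive (newton f m x) t) + Rabs (Derive (newton g m x) t)) (x i) (x j)
         + om * (hi - lo) ^ (m - 1) * (om * (hi - lo) ^ m) * (x j - x i)).
Proof.
  intros Hm Hf Hg Hh Hhor Hx Hnodes Homf Homg Hi Hj Hij.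
  assert (C1f := Cm_is_C1 m f Hm Hf); assert (C1g := Cm_is_C1 m g Hm Hg).
  assert (C1h := Cm_is_C1 m h Hm Hh).
  assert (C1pf := newton_is_C1 f m x Hm); assert (C1pg := newton_is_C1 g m x Hm).
  unfold A_quant; cbv zeta.
  rewrite (horizontal_lift_defect f g h (newton f m x) (newton g m x))
    by auto using horizontal_C1_everywhere, newton_interp.
  rewrite Rabs_mult, (Rabs_right 4) by lra; apply Rmult_le_compat_l; [lra |].
  apply RInt_lift_remainder_bound; auto.
  - intros t; apply C1pf.
  - intros t; apply C1pg.
  - intros t; apply continuous_Rminus; apply is_C1_continuous; auto.
  - intros t; apply continuous_Rminus; apply is_C1_continuous; auto.
  - intros t; apply continuous_Rminus; [apply C1f | apply C1pf].
  - intros t Ht; assert (Ht' : lo <= t <= hi)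
      by (generalize (Hnodes i Hi) (Hnodes j Hj); lra).
    assert (Ef := newton_error_bound f m x lo hi om Hf Hx Hnodes Homf).
    assert (Eg := newton_error_bound g m x lo hi om Hg Hx Hnodes Homg).
    generalize (Ef O t) (Eg O t) (Ef 1%nat t); rewrite Nat.sub_0_r; intros B0f B0g B1f.
    repeat split; [apply B0f | apply B0g | apply B1f]; auto; lia.
Qed.

Lemma AV_ratio_bound m d eta I A s : (1 <= m)%nat -> 0 < d -> 0 <= I -> 0 <= eta <= 1 ->
  0 <= s <= 2 * d ->
  Rabs A <= 4 * (eta * (2 * d) ^ m * I + eta * (2 * d) ^ (m - 1) * (eta * (2 * d) ^ m) * s) ->
  Rabs (A / (d ^ (2 * m) + d ^ m * I)) <= 4 ^ S m * eta.
Proof.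
  intros Hm Hd HI Heta Hs HA.
  assert (E2m : d ^ (2 * m) = d ^ m * d ^ m)
    by (replace (2 * m)%nat with (m + m)%nat by lia; apply pow_add).
  assert (E4 : 4 ^ S m = 4 * (2 ^ m * 2 ^ m))
    by (rewrite <- Rpow_mult_distr; simpl; do 2 f_equal; ring).
  assert (Hs' : (2 * d) ^ (m - 1) * s <= (2 * d) ^ m).
  { replace m with (S (m - 1)) at 2 by lia; rewrite <- tech_pow_Rmult.
    rewrite Rmult_comm; apply Rmult_le_compat_r; [apply pow_le |]; lra. }
  rewrite (Rpow_mult_distr 2 d m) in HA, Hs'; rewrite E2m, E4.
  assert (HT : 1 <= 2 ^ m) by (apply pow_R1_Rle; lra).
  assert (HX : 0 < d ^ m) by (apply pow_lt; lra).
  assert (H2 : 0 <= (2 * d) ^ (m - 1)) by (apply pow_le; lra).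
  set (T := 2 ^ m) in *; set (X := d ^ m) in *.
  assert (HXI : 0 <= X * I) by (apply Rmult_le_pos; lra).
  assert (HV : 0 < X * X + X * I) by (generalize (Rmult_lt_0_compat X X HX HX); lra).
  rewrite Rabs_div, (Rabs_right (X * X + X * I)) by lra.
  apply Rle_div_l; [lra |].
  assert (0 <= eta * T * (T - 1) * (X * I)) by (repeat apply Rmult_le_pos; lra).
  assert (eta * eta * (T * X) * ((2 * d) ^ (m - 1) * s) <= eta * 1 * (T * X) * (T * X)).
  { assert (0 <= T * X) by (apply Rmult_le_pos; lra).
    apply Rmult_le_compat; [repeat apply Rmult_le_pos; lra | apply Rmult_le_pos; lra | | lra].
    apply Rmult_le_compat_r; [| apply Rmult_le_compat_l]; lra. }
  lra.
Qed.

Lemma continuous_uniform_interval (u : R -> R) lo hi : (forall t, continuous u t) ->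
  forall eps, 0 < eps -> exists del, 0 < del /\ forall s t, lo <= s <= hi -> lo <= t <= hi ->
    Rabs (s - t) < del -> Rabs (u s - u t) < eps.
Proof.
  intros Hu eps He.
  destruct (Heine u (fun c => lo <= c <= hi) (compact_P3 lo hi)) with (mkposreal eps He)
    as [del Hdel]; [intros; apply continuity_pt_filterlim, Hu |].
  exists del; split; [apply cond_pos | intros s t Hs Ht; apply Hdel; auto].
Qed.

Lemma Cm_divdiff_unif_conv m phi K : Cm m phi -> compact K -> divdiff_unif_conv m phi K.
Proof.
  intros Hphi HK eps He.
  destruct (compact_P1 K HK) as [kl [ku HKb]].
  assert (Hfact : 0 < INR (fact m)) by apply INR_fact_lt_0.
  destruct (continuous_uniform_interval (Derive_n phi m) kl ku
    (fun t => Cm_continuous m phi Hphi m t (le_n m)) (eps * INR (fact m))) as [del [Hdel Hu]];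
    [nra |].
  exists del; split; auto; intros x y Hx Hy Hxy.
  destruct (divdiff_mean_value phi m x Hphi (proj2 Hx)) as [xi [[a [b [Ha [Hb Hab]]]] Exi]].
  destruct (divdiff_mean_value phi m y Hphi (proj2 Hy)) as [eta [[a' [b' [Ha' [Hb' Hab']]]] Eeta]].
  generalize (HKb _ (proj1 Hx a Ha)) (HKb _ (proj1 Hx b Hb))
    (HKb _ (proj1 Hy a' Ha')) (HKb _ (proj1 Hy b' Hb')); intros Ka Kb Ka' Kb'.
  destruct (Hxy b a' Hb Ha') as [_ [_ Dba]], (Hxy a b' Ha Hb') as [_ [_ Dab]].
  apply Rabs_def2 in Dba, Dab.
  specialize (Hu xi eta ltac:(lra) ltac:(lra) ltac:(apply Rabs_def1; lra)).
  rewrite <- Exi, <- Eeta, <- Rmult_minus_distr_l, Rabs_mult, (Rabs_right (INR (fact m))) in Hu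
    by lra.
  apply (Rmult_lt_reg_l (INR (fact m))); lra.
Qed.

Lemma small_factor C eps : 0 < C -> 0 < eps -> exists eta, 0 < eta <= 1 /\ C * eta < eps.
Proof.
  intros HC He; exists (Rmin 1 (eps / (2 * C))); split.
  - split; [apply Rmin_pos; [| apply Rdiv_lt_0_compat] | apply Rmin_l]; lra.
  - assert (E : C * (eps / (2 * C)) = eps / 2) by (field; lra).
    generalize (Rmult_le_compat_l _ _ _ (Rlt_le _ _ HC) (Rmin_r 1 (eps / (2 * C)))); lra.
Qed.

Lemma Cm_local_oscillation m phi kl ku eta : Cm m phi -> 0 < eta ->
  exists del, 0 < del /\ forall c r s t, kl <= c <= ku -> r < del ->
    c - r <= s <= c + r -> c - r <= t <= c + r ->
    Rabs (Derive_n phi m s - Derive_n phi m t) <= eta.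
Proof.
  intros Hphi Heta.
  destruct (continuous_uniform_interval (Derive_n phi m) (kl - 1) (ku + 1)
    (fun t => Cm_continuous m phi Hphi m t (le_n m)) eta Heta) as [del [Hdel Hu]].
  exists (Rmin del 1 / 2); split; [apply Rdiv_lt_0_compat; [apply Rmin_pos |]; lra |].
  intros c r s t Hc Hr Hs Ht; generalize (Rmin_l del 1) (Rmin_r del 1); intros.
  left; apply Hu; try lra; apply Rabs_def1; lra.
Qed.

Lemma Cm_horizontal_discrete_AV m f g h K : (0 < m)%nat ->
  Cm m f -> Cm m g -> Cm m h -> horizontal f g h -> compact K -> discrete_AV m f g h K.
Proof.
  intros Hm Hf Hg Hh Hhor HK eps He.
  destruct (compact_P1 K HK) as [kl [ku HKb]].
  destruct (small_factor (4 ^ S m) eps) as [eta [Heta Heps]]; [apply pow_lt; lra | auto |].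
  destruct (Cm_local_oscillation m f kl ku eta Hf) as [df [Hdf Hoscf]]; [lra |].
  destruct (Cm_local_oscillation m g kl ku eta Hg) as [dg [Hdg Hoscg]]; [lra |].
  exists (Rmin df dg); split; [apply Rmin_pos; lra |].
  intros x [HxK Hx] Hdiam i j Hi Hj Hij.
  set (d := diam m x) in *.
  generalize (Rmin_l df dg) (Rmin_r df dg); intros.
  assert (Hdpos : 0 < d) by (apply diam_pos; auto; lia).
  assert (Hnodes := nodes_near_first m x); fold d in Hnodes.
  assert (Kx0 := HKb _ (HxK O ltac:(lia))).
  assert (HA := A_quant_bound m f g h x (x O - d) (x O + d) eta i j ltac:(lia) Hf Hg Hh Hhor Hx
    Hnodes (fun s t => Hoscf (x O) d s t Kx0 ltac:(lra))
    (fun s t => Hoscg (x O) d s t Kx0 ltac:(lra)) Hi Hj (Rlt_le _ _ Hij)).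
  replace (x O + d - (x O - d)) with (2 * d) in HA by ring.
  assert (Hji : 0 <= x j - x i <= 2 * d) by (generalize (Hnodes i Hi) (Hnodes j Hj); lra).
  unfold V_quant; cbv zeta; fold d.
  eapply Rle_lt_trans; [apply (AV_ratio_bound m d eta _ _ (x j - x i)) | exact Heps];
    auto; try lia; try lra.
  apply RInt_ge_0; [lra | | intros; apply Rplus_le_le_0_compat; apply Rabs_pos].
  apply ex_RInt_continuous_R; intros t.
  apply continuous_Rplus; apply continuous_Rabs_comp; apply newton_is_C1; lia.
Qed.

Theorem proposition5p1 (m : nat) (f g h : R -> R) (K : R -> Prop) :
  (0 < m)%nat ->
  Cm m f -> Cm m g -> Cm m h ->
  horizontal f g h ->
  compact K ->
  (divdiff_unif_conv m f K /\ divdiff_unif_conv m g K /\ divdiff_unif_conv m h K) /\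
  discrete_AV m f g h K.
Proof.
  intros Hm Hf Hg Hh Hhor HK; split.
  - split; [| split]; apply Cm_divdiff_unif_conv; auto.
  - apply Cm_horizontal_discrete_AV; auto.
Qed.
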